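(* Let $S''=\{UD-DU : U \text{ an upper prime},\ D \text{ a lower prime}\}$. Then $S''$ generates the ideal $\mathcal{J}$ (as a two-sided ideal of $\mathcal{A}$).
   Context: $\mathcal{A}$ is the free associative $\mathbb{C}$-algebra on noncommuting generators $L,R$; words are finite products of these letters. A word is balanced if it contains equally many $L$'s and $R$'s. $\mathcal{J}$ is the two-sided ideal of $\mathcal{A}$ generated by $S=\{FG-GF : F,G \text{ nonempty balanced words}\}$. A word is prime if it is nonempty, balanced, and cannot be written as a product of two nonempty balanced words. For a balanced word $W=a_1\cdots a_n$, $e_k(W)=\sum_{i=1}^k\overline{a_i}$ ($0\le k\le n$) with $\overline{R}=1$, $\overline{L}=-1$. A prime $P$ of length $n$ is an upper prime if $e_k(P)>0$ for $1\le k\le n-1$, and a lower prime if $e_k(P)<0$ for $1\le k\le n-1$. *)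

From mathcomp Require Import all_boot all_algebra.
From mathcomp Require Import Rstruct complex.
Set Implicit Arguments. Unset Strict Implicit. Unset Printing Implicit Defensive.
Import GRing.Theory.
Local Open Scope ring_scope.

Definition CC : fieldType := (Rdefinitions.R)[i].

Definition word := seq bool.
Definition letR : bool := true.
Definition letL : bool := false.

Definition balanced (w : word) : bool :=
  count (fun a => a == letR) w == count (fun a => a == letL) w.

Definition prime_word (w : word) : Prop :=
  w != [::] /\ balanced w /\
  ~ (exists u v : word, [/\ u != [::], v != [::], balanced u, balanced v & w = u ++ v]).

Definition ek (k : nat) (w : word) : int :=
  \sum_(i < k) (if nth letL w i == letR then 1 else -1).

Definition upper_prime (w : word) : Prop :=
  prime_word w /\ forall k, (1 <= k)%N -> (k <= (size w).-1)%N -> 0 < ek k w.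

Definition lower_prime (w : word) : Prop :=
  prime_word w /\ forall k, (1 <= k)%N -> (k <= (size w).-1)%N -> ek k w < 0.

(* Noncommutative series in L, R: coefficient functions on words. *)
Definition ser := word -> CC.

(* The free algebra A: series with finite support. *)
Definition inA (f : ser) : Prop :=
  exists s : seq word, forall w, w \notin s -> f w = 0.

Definition szero : ser := fun _ => 0.
Definition sadd (f g : ser) : ser := fun w => f w + g w.
Definition ssub (f g : ser) : ser := fun w => f w - g w.
Definition smul (f g : ser) : ser :=
  fun w => \sum_(i < (size w).+1) f (take i w) * g (drop i w).
Definition mono (u : word) : ser := fun w => if w == u then 1 else 0.

Definition is_ideal (I : ser -> Prop) : Prop :=
  [/\ forall x, I x -> inA x,
      I szero,
      forall x y, I x -> I y -> I (sadd x y),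
      forall a x, inA a -> I x -> I (smul a x)
    & forall a x, inA a -> I x -> I (smul x a)].

Definition gen_ideal (S : ser -> Prop) (x : ser) : Prop :=
  forall I, is_ideal I -> (forall s, S s -> I s) -> I x.

Definition Sgen (x : ser) : Prop :=
  exists F G : word, [/\ F != [::], G != [::], balanced F, balanced G &
    x = ssub (mono (F ++ G)) (mono (G ++ F))].

Definition Sgen'' (x : ser) : Prop :=
  exists U D : word, [/\ upper_prime U, lower_prime D &
    x = ssub (mono (U ++ D)) (mono (D ++ U))].

(* Let I be an ideal containing S''.  We show FG = GF mod I for all balanced
   F, G by induction on |F| + |G|.  Cutting a nonempty balanced word at its
   first return to height 0 writes it as P F' with P a prime of the form
   R A L (upper) or L A R (lower), A balanced; so FG = GF reduces to the case
   where F and G are such primes.  An upper and a lower prime commute since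
   their commutator lies in S''.  Two primes of the same type, say R A L and
   R B L, have products R (A M B) L and R (B M A) L with M = L R, and
   A M B = M A B = M B A = B M A by commuting shorter balanced words. *)
From mathcomp Require Import all_boot all_algebra.
From mathcomp Require Import Rstruct complex.
From mathcomp Require Import zify.
From Stdlib Require Import FunctionalExtensionality.
Set Implicit Arguments. Unset Strict Implicit. Unset Printing Implicit Defensive.
Import GRing.Theory.
Local Open Scope ring_scope.

Lemma smul_subl f g h : smul (ssub f g) h = ssub (smul f h) (smul g h).
Proof.
apply: functional_extensionality => w; rewrite /smul /ssub -sumrB.
by apply: eq_bigr => i _; rewrite mulrBl.
Qed.

Lemma smul_subr f g h : smul h (ssub f g) = ssub (smul h f) (smul h g).
Proof.
apply: functional_extensionality => w; rewrite /smul /ssub -sumrB.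
by apply: eq_bigr => i _; rewrite mulrBr.
Qed.

Lemma smul0l f : smul szero f = szero.
Proof.
apply: functional_extensionality => w.
by rewrite /smul big1 // => i _; rewrite mul0r.
Qed.

Lemma smul_mono u v : smul (mono u) (mono v) = mono (u ++ v).
Proof.
apply: functional_extensionality => w; rewrite /smul /mono.
have [->|neq_w] := eqVneq w (u ++ v); last first.
  rewrite big1 // => i _.
  case: eqP => [take_u|]; last by rewrite mul0r.
  case: eqP => [drop_v|]; last by rewrite mulr0.
  by rewrite -take_u -drop_v cat_take_drop eqxx in neq_w.
have lt_u : (size u < (size (u ++ v)).+1)%N by rewrite size_cat ltnS leq_addr.
rewrite (bigD1 (Ordinal lt_u)) //= take_size_cat // drop_size_cat // !eqxx mulr1.
rewrite big1 ?addr0 // => i /eqP neq_i; case: eqP => [take_u|]; last by rewrite mul0r.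
case: neq_i; apply: val_inj => /=.
have size_take : size (take i (u ++ v)) = i by rewrite size_takel // -ltnS.
by rewrite -size_take take_u.
Qed.

Lemma inA0 : inA szero.
Proof. by exists [::]. Qed.

Lemma inA_mono u : inA (mono u).
Proof. by exists [:: u] => w; rewrite mem_seq1 /mono => /negbTE ->. Qed.

Lemma inA_sub f g : inA f -> inA g -> inA (ssub f g).
Proof.
move=> [s f0] [t g0]; exists (s ++ t) => w; rewrite mem_cat negb_or => /andP[ws wt].
by rewrite /ssub f0 // g0 // subrr.
Qed.

Lemma gen_ideal_sub (S T : ser -> Prop) :
  (forall I, is_ideal I -> (forall t, T t -> I t) -> forall s, S s -> I s) ->
  forall x, gen_ideal S x -> gen_ideal T x.
Proof. by move=> ST x Sx I idealI TI; apply: Sx => //; apply: ST. Qed.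

Section Congruence.

Variable I : ser -> Prop.
Hypothesis idealI : is_ideal I.

Definition eqmod (u v : word) : Prop := I (ssub (mono u) (mono v)).

Lemma eqmod_refl u : eqmod u u.
Proof.
case: idealI => _ I0 _ _ _; rewrite /eqmod.
suff -> : ssub (mono u) (mono u) = szero by [].
by apply: functional_extensionality => w; rewrite /ssub subrr.
Qed.

Lemma eqmod_trans v u w : eqmod u v -> eqmod v w -> eqmod u w.
Proof.
case: idealI => _ _ ID _ _ uv vw; rewrite /eqmod.
suff -> : ssub (mono u) (mono w) = sadd (ssub (mono u) (mono v)) (ssub (mono v) (mono w)).
  exact: ID.
by apply: functional_extensionality => x; rewrite /ssub /sadd addrA subrK.
Qed.

Lemma eqmod_sym u v : eqmod u v -> eqmod v u.
Proof.
case: idealI => _ _ _ IMl _ uv; rewrite /eqmod.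
(* Closure under negation is not an ideal axiom: multiply by -1 instead. *)
have inA_m1 : inA (ssub szero (mono [::])) by apply: inA_sub; [exact: inA0 | exact: inA_mono].
suff -> : ssub (mono v) (mono u) = smul (ssub szero (mono [::])) (ssub (mono u) (mono v)).
  exact: IMl.
rewrite smul_subl smul0l smul_subr !smul_mono /=.
by apply: functional_extensionality => w; rewrite /ssub /szero sub0r opprB.
Qed.

Lemma eqmod_cat x y u v : eqmod u v -> eqmod (x ++ u ++ y) (x ++ v ++ y).
Proof.
case: idealI => _ _ _ IMl IMr uv; rewrite /eqmod.
suff -> : ssub (mono (x ++ u ++ y)) (mono (x ++ v ++ y))
        = smul (smul (mono x) (ssub (mono u) (mono v))) (mono y).
  by apply: IMr; [exact: inA_mono | apply: IMl => //; exact: inA_mono].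
by rewrite smul_subr !smul_mono smul_subl !smul_mono !catA.
Qed.

Lemma eqmod_catl x u v : eqmod u v -> eqmod (x ++ u) (x ++ v).
Proof. by move/(eqmod_cat x [::]); rewrite !cats0. Qed.

Lemma eqmod_catr y u v : eqmod u v -> eqmod (u ++ y) (v ++ y).
Proof. exact: eqmod_cat [::] y u v. Qed.

Definition commutes (u v : word) : Prop := eqmod (u ++ v) (v ++ u).

Lemma commutes_sym u v : commutes u v -> commutes v u.
Proof. exact: eqmod_sym. Qed.

Lemma commutes_nil u : commutes [::] u.
Proof. by rewrite /commutes cats0; apply: eqmod_refl. Qed.

Lemma commutes_catl u v w : commutes u w -> commutes v w -> commutes (u ++ v) w.
Proof.
move=> uw vw; apply: (eqmod_trans (v := u ++ w ++ v)).
  by rewrite -catA; apply: eqmod_catl.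
by rewrite !catA; apply: eqmod_catr.
Qed.

Lemma commutes_catr u v w : commutes w u -> commutes w v -> commutes w (u ++ v).
Proof. by move=> /commutes_sym wu /commutes_sym wv; apply/commutes_sym/commutes_catl. Qed.

Lemma commutes_brackets c d A B :
  commutes A [:: d; c] -> commutes A B -> commutes [:: d; c] B ->
  commutes (c :: A ++ [:: d]) (c :: B ++ [:: d]).
Proof.
set M := [:: d; c] => AM AB MB.
have AMB : eqmod (A ++ M ++ B) (B ++ M ++ A).
  apply: (eqmod_trans (v := M ++ A ++ B)); first by rewrite !catA; apply: eqmod_catr.
  apply: (eqmod_trans (v := M ++ B ++ A)); first exact: eqmod_catl.
  by rewrite !catA; apply: eqmod_catr.
by have := eqmod_cat [:: c] [:: d] AMB; rewrite /commutes /= -!catA.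
Qed.

End Congruence.

Definition weight (a : bool) : int := if a == letR then 1 else -1.

Definition height (w : word) : int := \sum_(a <- w) weight a.

Lemma height_nil : height [::] = 0.
Proof. exact: big_nil. Qed.

Lemma height_cons a w : height (a :: w) = weight a + height w.
Proof. exact: big_cons. Qed.

Lemma height_cat u v : height (u ++ v) = height u + height v.
Proof. exact: big_cat. Qed.

Lemma height_count w :
  height w = (count (fun a => a == letR) w)%:Z - (count (fun a => a == letL) w)%:Z.
Proof.
elim: w => [|a w IH]; first by rewrite height_nil.
by rewrite height_cons IH; case: a; rewrite /weight /=; lia.
Qed.

Lemma height_rcons w a : height (rcons w a) = height w + weight a.
Proof. by rewrite -cats1 height_cat /height big_seq1. Qed.

Lemma balancedE w : balanced w = (height w == 0).
Proof. by rewrite height_count subr_eq0 eqz_nat. Qed.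

Lemma ek_height k w : (k <= size w)%N -> ek k w = height (take k w).
Proof.
elim: k => [|k IH] lt_k; first by rewrite /ek big_ord0 take0 height_nil.
rewrite /ek big_ord_recr /= -/(ek k w) (IH (ltnW lt_k)) (take_nth letL lt_k).
by rewrite height_rcons.
Qed.

Lemma shortest_balanced_prefix w : w != [::] -> balanced w ->
  exists P F, [/\ w = P ++ F, P != [::], balanced P, balanced F
    & forall k, (0 < k < size P)%N -> height (take k P) != 0].
Proof.
move=> w0; rewrite balancedE => /eqP hw.
pose p k := (0 < k)%N && (height (take k w) == 0).
have pw : p (size w) by rewrite /p take_size hw eqxx lt0n size_eq0 w0.
case: (ex_minnP (ex_intro p _ pw)) => m /andP[m0 /eqP hm] min_m.
have le_m : (m <= size w)%N := min_m _ pw.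
exists (take m w), (drop m w); split.
- by rewrite cat_take_drop.
- by rewrite -size_eq0 size_takel // -lt0n.
- by rewrite balancedE hm.
- by move: hw; rewrite balancedE -{1}(cat_take_drop m w) height_cat hm add0r => ->.
- move=> k; rewrite size_takel // => /andP[k0 lt_km].
  rewrite take_takel ?(ltnW lt_km) //; apply/negP => /eqP hk.
  by have := min_m k; rewrite /p k0 hk eqxx => /(_ isT); lia.
Qed.

Lemma prefix_height_sign a s :
  (forall k, (0 < k < size (a :: s))%N -> height (take k (a :: s)) != 0) ->
  forall k, (0 < k < size (a :: s))%N -> 0 < weight a * height (take k (a :: s)).
Proof.
move=> nz; elim=> [//|[|k] IH] /andP[_ lt_k]; have le_k := ltnW lt_k.
  by rewrite /= take0 height_cons height_nil addr0; case: (a).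
have := IH le_k; have := nz k.+2 lt_k; rewrite (take_nth letL le_k) height_rcons.
by case: (a); case: nth; rewrite /weight /=; lia.
Qed.

Lemma prime_of_prefix_heights P : P != [::] -> balanced P ->
  (forall k, (0 < k < size P)%N -> height (take k P) != 0) -> prime_word P.
Proof.
move=> P0 bP nz; split=> //; split=> // -[u [v [u0 v0 bu _ def_P]]].
have lt_u : (0 < size u < size P)%N.
  by rewrite def_P size_cat -{2}[size u]addn0 ltn_add2l !lt0n !size_eq0 u0 v0.
move: bu; rewrite balancedE => /eqP hu.
by move: (nz _ lt_u); rewrite def_P take_size_cat // hu eqxx.
Qed.

Lemma bracket_of_prefix_signs a s : balanced (a :: s) ->
  (forall k, (0 < k < size (a :: s))%N -> 0 < weight a * height (take k (a :: s))) ->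
  exists2 A, balanced A & s = A ++ [:: ~~ a].
Proof.
case/lastP: s => [|A c]; first by rewrite balancedE height_cons height_nil; case: a.
rewrite balancedE height_cons height_rcons => hP sgn.
have := sgn (size A).+1; rewrite /= size_rcons -cats1 take_size_cat // height_cons.
move=> /(_ (ltnSn _)) pos {sgn}; exists A; rewrite ?balancedE.
  by move: hP pos; case: a; case: c; rewrite /weight /=; lia.
by move: hP pos; case: a; case: c; rewrite /weight //=; lia.
Qed.

Lemma first_return_decomposition w : w != [::] -> balanced w ->
  exists a A F, [/\ w = (a :: A ++ [:: ~~ a]) ++ F, balanced A, balanced F
    & if a then upper_prime (a :: A ++ [:: ~~ a]) else lower_prime (a :: A ++ [:: ~~ a])].
Proof.
move=> w0 bw; have [P [F [-> P0 bP bF nz]]] := shortest_balanced_prefix w0 bw.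
case: P P0 bP nz => [//|a s] P0 bP nz.
have sgn := prefix_height_sign nz.
have [A bA def_s] := bracket_of_prefix_signs bP sgn.
have prP := prime_of_prefix_heights P0 bP nz.
have ek_sgn k : (1 <= k)%N -> (k <= (size (a :: s)).-1)%N -> 0 < weight a * ek k (a :: s).
  by move=> k1 /= k2; rewrite ek_height; [apply: sgn|]; rewrite /=; lia.
exists a, A, F; rewrite -def_s; split=> //.
by case: (a) prP ek_sgn => prP ek_sgn; split=> // k k1 k2;
  have := ek_sgn k k1 k2; rewrite /weight /=; lia.
Qed.

Lemma balanced_bracket a A : balanced A -> balanced (a :: A ++ [:: ~~ a]).
Proof. by rewrite !balancedE height_cons cats1 height_rcons => /eqP->; case: a. Qed.

Section Commutation.

Variable I : ser -> Prop.
Hypothesis idealI : is_ideal I.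
Hypothesis S''_in_I : forall s, Sgen'' s -> I s.

Lemma commutes_prime_brackets a b A B :
  balanced A -> balanced B ->
  (if a then upper_prime (a :: A ++ [:: ~~ a]) else lower_prime (a :: A ++ [:: ~~ a])) ->
  (if b then upper_prime (b :: B ++ [:: ~~ b]) else lower_prime (b :: B ++ [:: ~~ b])) ->
  (forall F G, balanced F -> balanced G -> (size F + size G < size A + size B + 4)%N ->
     commutes I F G) ->
  commutes I (a :: A ++ [:: ~~ a]) (b :: B ++ [:: ~~ b]).
Proof.
move=> bA bB; case: a; case: b => /= pQ pP IH.
- by apply: (commutes_brackets idealI); apply: IH => //=; lia.
- by apply: S''_in_I; exists (true :: A ++ [:: false]), (false :: B ++ [:: true]).
- apply/(commutes_sym idealI)/S''_in_I.
  by exists (true :: B ++ [:: false]), (false :: A ++ [:: true]).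
- by apply: (commutes_brackets idealI); apply: IH => //=; lia.
Qed.

Lemma commutes_balanced F G : balanced F -> balanced G -> commutes I F G.
Proof.
have [n] := ubnP (size F + size G); elim: n F G => // n IH F G lt_FG bF bG.
have [->|F0] := eqVneq F [::]; first exact: (commutes_nil idealI).
have [->|G0] := eqVneq G [::]; first exact/(commutes_sym idealI)/(commutes_nil idealI).
have [a [A [F' [def_F bA bF' pP]]]] := first_return_decomposition F0 bF.
have [b [B [G' [def_G bB bG' pQ]]]] := first_return_decomposition G0 bG.
set P := a :: A ++ [:: ~~ a] in def_F pP.
set Q := b :: B ++ [:: ~~ b] in def_G pQ.
have sizeF : size F = (size A + 2 + size F')%N by rewrite def_F size_cat /= size_cat /=; lia.
have sizeG : size G = (size B + 2 + size G')%N by rewrite def_G size_cat /= size_cat /=; lia.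
have [F'0|F'n] := eqVneq F' [::]; last first.
  have F'pos : (0 < size F')%N by rewrite lt0n size_eq0.
  rewrite def_F; apply: (commutes_catl idealI); apply: IH => //;
    rewrite ?balanced_bracket ?size_cat /= ?size_cat /=; lia.
have [G'0|G'n] := eqVneq G' [::]; last first.
  have G'pos : (0 < size G')%N by rewrite lt0n size_eq0.
  rewrite def_G; apply: (commutes_catr idealI); apply: IH => //;
    rewrite ?balanced_bracket ?size_cat /= ?size_cat /=; lia.
rewrite def_F def_G F'0 G'0 !cats0; apply: commutes_prime_brackets => // F1 G1 bF1 bG1 lt1.
by apply: IH => //; lia.
Qed.

End Commutation.

Theorem proposition5p3 :
  forall x : ser, gen_ideal Sgen'' x <-> gen_ideal Sgen x.
Proof.
move=> x; split; apply: gen_ideal_sub => I idealI gensI s.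
- case=> U [D [[[U0 [bU _]] _] [[D0 [bD _]] _] ->]].
  by apply: gensI; exists U, D.
- case=> F [G [_ _ bF bG ->]].
  exact: commutes_balanced.
Qed.
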